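(* Let $\Theta$ be a finite set, $b$ a belief function on $\Theta$ with mass function $m_b$, and $\emptyset \subsetneq A \subseteq \Theta$. The set of $L_1$ conditional belief functions of $b$ with respect to $A$ in the mass space, i.e. the set of belief functions $a$ with $\vec{m}_a \in \mathcal{M}_A$ minimizing $\|\vec{m}_b - \vec{m}_a\|_{L_1}$ over $\mathcal{M}_A$, is \[ \Big\{ a : 2^\Theta\to[0,1] \text{ belief function} : \mathcal{C}_a \subseteq A,\ m_a(B) \geq m_b(B)\ \forall\, \emptyset \subsetneq B \subseteq A \Big\}. \]
   Context: A mass function on a finite set $\Theta$ is $m:2^\Theta\to[0,1]$ with $m(\emptyset)=0$ and $\sum_{A\subseteq\Theta} m(A)=1$; the associated belief function is $b(A)=\sum_{B\subseteq A} m_b(B)$. Focal elements are subsets with nonzero mass; the core $\mathcal{C}_a$ of a belief function $a$ is the union of its focal elements. The mass vector of $b$ is $\vec{m}_b=[m_b(B)]_{\emptyset\subsetneq B\subseteq\Theta}\in\mathbb{R}^{2^{|\Theta|}-1}$. For $\emptyset\subsetneq A\subseteq\Theta$, $\mathcal{M}_A$ is the set of mass vectors of belief functions all of whose focal elements are subsets of $A$ (the convex hull of the mass vectors of the categorical belief functions $m(B)=1$, $\emptyset\subsetneq B\subseteq A$). The $L_1$ distance is $\|\vec{m}_b-\vec{m}_{b'}\|_{L_1}=\sum_{\emptyset\subsetneq B\subseteq\Theta}|m_b(B)-m_{b'}(B)|$. *)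

From mathcomp Require Import all_boot all_order all_algebra.
From mathcomp Require Import reals.
Set Implicit Arguments. Unset Strict Implicit. Unset Printing Implicit Defensive.
Import Order.TTheory GRing.Theory Num.Theory.
Local Open Scope ring_scope.

Section BF.
Variables (R : realType) (T : finType).

Definition is_mass (m : {set T} -> R) : Prop :=
  [/\ m set0 = 0, (forall B, 0 <= m B <= 1) & \sum_(B : {set T}) m B = 1].

Definition belief (m : {set T} -> R) (A : {set T}) : R :=
  \sum_(B : {set T} | B \subset A) m B.

Definition focal (m : {set T} -> R) (B : {set T}) : bool := m B != 0.
Definition core (m : {set T} -> R) : {set T} :=
  \bigcup_(B : {set T} | focal m B) B.

Definition in_MA (A : {set T}) (m : {set T} -> R) : Prop :=
  is_mass m /\ forall B, focal m B -> B \subset A.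

Definition L1dist (m m' : {set T} -> R) : R :=
  \sum_(B : {set T} | B != set0) `|m B - m' B|.

Definition L1_conditional (A : {set T}) (mb ma : {set T} -> R) : Prop :=
  in_MA A ma /\ forall m', in_MA A m' -> L1dist mb ma <= L1dist mb m'.

End BF.

(* On M_A every mass vector vanishes outside the subsets of A and sums to 1
   there, so the L1 distance from m_b splits as
     sum_{B subset A} (|m_b B - m_a B| - (m_a B - m_b B)) + const,
   the constant not depending on m_a.  The first sum is twice the mass that
   m_a misses below m_b on the subsets of A: it is nonnegative and vanishes
   exactly when m_a dominates m_b there.  Moving all mass of m_b lying outside
   the subsets of A onto A itself gives such a dominating element of M_A, so
   the minimizers are precisely the dominating ones. *)

From mathcomp Require Import all_boot all_order all_algebra.
From mathcomp Require Import reals.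
From mathcomp Require Import lra.
Import Order.TTheory GRing.Theory Num.Theory.
Set Implicit Arguments. Unset Strict Implicit. Unset Printing Implicit Defensive.
Local Open Scope ring_scope.

Section MassSpace.
Variables (R : realType) (T : finType).
Implicit Types (m ma : {set T} -> R) (A B : {set T}).

Lemma in_MAE A m : in_MA A m <-> is_mass m /\ core m \subset A.
Proof.
split=> [[mm foc] | [mm sub]]; first by split=> //; apply/bigcupsP.
by split=> // B fB; apply: subset_trans sub; apply: (bigcup_sup B).
Qed.

Lemma in_MA_notsub A m B : in_MA A m -> ~~ (B \subset A) -> m B = 0.
Proof.
case=> _ foc nsub; apply/eqP; apply: contraNT nsub; exact: foc.
Qed.

Lemma in_MA_sum_sub A m : in_MA A m ->
  \sum_(B | (B != set0) && (B \subset A)) m B = 1.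
Proof.
move=> mA; have [[m0 _ m1] _] := mA.
rewrite -m1 [RHS](bigID (fun B => (B != set0) && (B \subset A))) /=.
rewrite [X in _ = _ + X]big1 ?addr0 // => B.
rewrite negb_and negbK => /orP [/eqP -> // | nsub].
exact: in_MA_notsub nsub.
Qed.

Lemma mass_ge0 m B : is_mass m -> 0 <= m B.
Proof. by case=> _ /(_ B) /andP[]. Qed.

Lemma belief_le1 m A : is_mass m -> belief m A <= 1.
Proof.
move=> mM; have [_ _ <-] := mM.
rewrite [X in _ <= X](bigID (fun B => B \subset A)) /= lerDl.
by apply: sumr_ge0 => B _; apply: mass_ge0.
Qed.

Lemma mass_le_belief m A : is_mass m -> m A <= belief m A.
Proof.
move=> mM; rewrite /belief (bigD1 A) //= lerDl.
by apply: sumr_ge0 => B _; apply: mass_ge0.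
Qed.

Variables (mb : {set T} -> R) (A : {set T}).

Definition L1_shortfall ma : R :=
  \sum_(B | (B != set0) && (B \subset A)) (`|mb B - ma B| - (ma B - mb B)).

Definition L1_offset : R :=
  1 - \sum_(B | (B != set0) && (B \subset A)) mb B
    + \sum_(B | (B != set0) && ~~ (B \subset A)) `|mb B|.

Lemma L1dist_in_MA ma : in_MA A ma -> L1dist mb ma = L1_shortfall ma + L1_offset.
Proof.
move=> mA; have sum1 := in_MA_sum_sub mA.
rewrite /L1dist (bigID (fun B => B \subset A)) /= /L1_shortfall /L1_offset.
rewrite !sumrB sum1.
rewrite [X in _ + X = _](eq_bigr (fun B => `|mb B|)); last first.
  by move=> B /andP [_ nsub]; rewrite (in_MA_notsub mA nsub) subr0.
lra.
Qed.

Lemma L1_shortfall_ge0 ma : 0 <= L1_shortfall ma.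
Proof. by apply: sumr_ge0 => B _; rewrite subr_ge0 distrC ler_norm. Qed.

Lemma L1_shortfall_eq0P ma :
  L1_shortfall ma = 0 <->
  forall B, B != set0 -> B \subset A -> mb B <= ma B.
Proof.
split=> [/eqP | dom].
  rewrite psumr_eq0 => [/allP sh0 B nzB sBA | B _]; last first.
    by rewrite subr_ge0 distrC ler_norm.
  have := sh0 B (mem_index_enum _); rewrite nzB sBA /= subr_eq0 => /eqP e.
  by rewrite -subr_ge0 -e.
apply: big1 => B /andP [nzB sBA].
by rewrite distrC ger0_norm ?subrr // subr_ge0 dom.
Qed.

Definition mass_onto : {set T} -> R := fun B =>
  (if B \subset A then mb B else 0) + (if B == A then 1 - belief mb A else 0).

Hypotheses (mbM : is_mass mb) (nzA : A != set0).

Lemma mass_onto_in_MA : in_MA A mass_onto.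
Proof.
have [mb0 mb01 _] := mbM.
have mbA_ge0 := mass_ge0 A mbM.
have bel_le1 := belief_le1 A mbM.
have mbA_le_bel := mass_le_belief A mbM.
split; last first.
  move=> B; rewrite /focal /mass_onto.
  case: (boolP (B \subset A)) => // nsub.
  by rewrite ifN ?addr0 ?eqxx //; apply: contraNneq nsub => ->.
split.
- by rewrite /mass_onto sub0set mb0 ifN ?addr0 // eq_sym.
- move=> B; rewrite /mass_onto; case: eqP => [-> | _].
    by rewrite subxx; apply/andP; split; lra.
  by rewrite addr0; case: ifP => _; [exact: mb01 | rewrite lexx ler01].
- rewrite /mass_onto big_split /= -!big_mkcond /= big_pred1_eq.
  by rewrite /belief addrC subrK.
Qed.

Lemma mass_onto_dominates B : B \subset A -> mb B <= mass_onto B.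
Proof.
move=> sBA; rewrite /mass_onto sBA lerDl.
by case: ifP => // _; rewrite subr_ge0 belief_le1.
Qed.

End MassSpace.

Theorem theorem1 (R : realType) (T : finType) (mb : {set T} -> R) (A : {set T}) :
  is_mass mb -> A != set0 ->
  forall ma : {set T} -> R,
    L1_conditional A mb ma <->
    [/\ is_mass ma, core ma \subset A &
        forall B : {set T}, B != set0 -> B \subset A -> mb B <= ma B].
Proof.
move=> mbM nzA ma; split.
- case=> maA minimal.
  have ontoA := mass_onto_in_MA mbM nzA.
  have onto0 : L1_shortfall mb A (mass_onto mb A) = 0.
    apply/L1_shortfall_eq0P => B _.
    exact: (mass_onto_dominates (A:=A) mbM).
  have := minimal _ ontoA.
  rewrite (L1dist_in_MA mb maA) (L1dist_in_MA mb ontoA) onto0 lerD2r => sh_le0.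
  have [maM coreA] := (in_MAE A ma).1 maA.
  split=> //; apply/L1_shortfall_eq0P/eqP.
  by rewrite eq_le sh_le0 L1_shortfall_ge0.
- case=> maM coreA dom.
  have maA : in_MA A ma by apply/in_MAE.
  split=> // m' m'A.
  rewrite (L1dist_in_MA mb maA) (L1dist_in_MA mb m'A).
  by rewrite (L1_shortfall_eq0P mb A ma).2 // lerD2r L1_shortfall_ge0.
Qed.
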